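(* Let $t$ and $\Delta_s$ be positive integers and let $G$ be an undirected graph. There exists a $(t\cdot\Delta_s,\Delta_s)$-dissolution for $G$ if and only if $G$ has a $t$-star partition.
   Context: For $V'\subseteq V(G)$ let $Z(V',G):=\{(x,y)\mid x\in V',\ y\in V(G)\setminus V',\ \{x,y\}\in E(G)\}$. For positive integers $s,\Delta_s$, an $(s,\Delta_s)$-dissolution for $G$ is a pair $(D,z)$ with $D\subset V(G)$ and $z\colon Z(D,G)\to\{0,\dots,s\}$ such that (a) each $v'\in D$ satisfies $\sum_{(v',v)\in Z(D,G)} z(v',v)=s$, and (b) each $v\in V(G)\setminus D$ satisfies $\sum_{(v',v)\in Z(D,G)} z(v',v)=\Delta_s$. A $t$-star $K_{1,t}$ is the graph with vertices $v_1,\dots,v_{t+1}$ and edges $\{v_1,v_i\}$, $2\le i\le t+1$. A $t$-star partition of $G$ is a partition of $V(G)$ into sets $V_1,\dots,V_{|V(G)|/(t+1)}$ of size $t+1$ such that each induced subgraph $G[V_i]$ contains a $t$-star as a subgraph. *)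

From mathcomp Require Import all_boot.
Set Implicit Arguments. Unset Strict Implicit. Unset Printing Implicit Defensive.

Definition simple_graph (T : finType) (e : rel T) : Prop :=
  symmetric e /\ irreflexive e.

Definition Zset (T : finType) (e : rel T) (D : {set T}) : {set T * T} :=
  [set p : T * T | [&& p.1 \in D, p.2 \notin D & e p.1 p.2]].

(* (s,Ds)-dissolution (D,z); z is a function on pairs, only its values on
   Z(D,G) matter, and those must lie in {0,...,s}. *)
Definition dissolution (T : finType) (e : rel T) (s Ds : nat)
    (D : {set T}) (z : T * T -> nat) : Prop :=
  [/\ (forall p, p \in Zset e D -> z p <= s),
      (forall v, v \in D -> \sum_(p in Zset e D | p.1 == v) z p = s)
    & (forall v, v \notin D -> \sum_(p in Zset e D | p.2 == v) z p = Ds)].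

(* G[B] contains a t-star as a subgraph (B has exactly t+1 vertices):
   some vertex c of B is adjacent to every other vertex of B. *)
Definition contains_star (T : finType) (e : rel T) (B : {set T}) : Prop :=
  exists2 c, c \in B & forall v, v \in B -> v != c -> e c v.

Definition star_partition (T : finType) (e : rel T) (t : nat)
    (P : {set {set T}}) : Prop :=
  [/\ partition P [set: T],
      (forall B, B \in P -> #|B| = t.+1)
    & (forall B, B \in P -> contains_star e B)].

From mathcomp Require Import all_boot zify.
Set Implicit Arguments. Unset Strict Implicit. Unset Printing Implicit Defensive.

(* Both sides are equivalent to the existence of a centre map c : V -> V that
   is idempotent, joins every non-fixed vertex to its image by an edge, and has
   all fibres of size t+1.  From a centre map, weighting each edge (c y, y) by
   Ds gives a dissolution whose dissolved set is the set of centres.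
   Conversely, in a dissolution every vertex of D sends t * Ds and every other
   vertex receives Ds, so |V \ D| = t |D|; double counting the same weights
   shows that t copies of each vertex of D satisfy Hall's condition towards
   V \ D along edges of positive weight, and the resulting perfect matching
   hands t leaves to every centre. *)

Section HallMarriage.

Variables (X Y : finType).
Implicit Types (r : X -> Y -> bool) (A S : {set X}) (N : {set Y}).

Definition neighbours r S : {set Y} := [set y | [exists x in S, r x y]].

Definition avoiding r N : X -> Y -> bool := fun x y => r x y && (y \notin N).

Definition matching r A (f : X -> Y) :=
  {in A &, injective f} /\ {in A, forall x, r x (f x)}.

Definition hall_condition r A :=
  forall S, S \subset A -> #|S| <= #|neighbours r S|.

Lemma neighboursU r S1 S2 :
  neighbours r (S1 :|: S2) = neighbours r S1 :|: neighbours r S2.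
Proof.
apply/setP=> y; rewrite !inE; apply/existsP/orP.
  by case=> x /andP[/setUP[] xS rxy]; [left | right]; apply/existsP; exists x;
     rewrite xS.
by case=> /existsP[x /andP[xS rxy]]; exists x; rewrite inE xS ?orbT.
Qed.

Lemma neighbours_avoiding r N S :
  neighbours r S \subset N :|: neighbours (avoiding r N) S.
Proof.
apply/subsetP=> y /[!inE] /existsP[x /andP[xS rxy]].
case: (boolP (y \in N)) => //= yN.
by apply/existsP; exists x; rewrite xS /avoiding rxy yN.
Qed.

Lemma matching_glue r A S N f1 f2 :
    matching r S f1 -> {in S, forall x, f1 x \in N} ->
    matching (avoiding r N) (A :\: S) f2 ->
  matching r A (fun x => if x \in S then f1 x else f2 x).
Proof.
move=> [inj1 r1] f1N [inj2 r2].
have f2N x : x \in A -> x \notin S -> f2 x \notin N.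
  by move=> xA xS; have /r2/andP[] : x \in A :\: S by rewrite inE xS.
split=> [x1 x2 x1A x2A /= | x xA].
  case: ifP => x1S; case: ifP => x2S E.
  - exact: inj1.
  - by have := f2N x2 x2A (negbT x2S); rewrite -E f1N.
  - by have := f2N x1 x1A (negbT x1S); rewrite E f1N.
  - by apply: inj2 E; rewrite in_setD ?x1S ?x2S.
case: ifP => xS; first exact: r1.
by have /r2/andP[] : x \in A :\: S by rewrite inE xS.
Qed.

Lemma hall_condition_critical r A S :
    hall_condition r A -> S \subset A -> #|neighbours r S| <= #|S| ->
  hall_condition (avoiding r (neighbours r S)) (A :\: S).
Proof.
move=> hA SA critS S2 S2AS.
have S2A : S2 \subset A := subset_trans S2AS (subsetDl A S).
have disjS : S :&: S2 = set0.
  apply/setP=> x; rewrite !inE; apply/andP=> -[xS /(subsetP S2AS)].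
  by rewrite inE xS.
have hU := hA (S :|: S2); rewrite subUset SA S2A neighboursU in hU.
have cover_nbr : neighbours r S :|: neighbours r S2 \subset
                 neighbours r S :|: neighbours (avoiding r (neighbours r S)) S2.
  by rewrite subUset subsetUl neighbours_avoiding.
have := subset_leq_card cover_nbr.
have := (leq_card_setU (neighbours r S)
                       (neighbours (avoiding r (neighbours r S)) S2)).1.
have := cardsUI S S2; rewrite disjS cards0.
by move: (hU isT) critS; lia.
Qed.

Lemma hall_condition_surplus r A x0 y :
    (forall S, S != set0 -> S \proper A -> #|S| < #|neighbours r S|) ->
    x0 \in A ->
  hall_condition (avoiding r [set y]) (A :\ x0).
Proof.
move=> surplus x0A S SA.
have [->|S_ne0] := eqVneq S set0; first by rewrite cards0.
have SpA : S \proper A.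
  apply/properP; split; first exact: subset_trans SA (subsetDl A _).
  by exists x0 => //; apply/negP=> /(subsetP SA); rewrite !inE eqxx.
have := subset_leq_card (neighbours_avoiding r [set y] S).
have := (leq_card_setU [set y] (neighbours (avoiding r [set y]) S)).1.
by rewrite cards1; move: (surplus S S_ne0 SpA); lia.
Qed.

Theorem hall_marriage (y0 : Y) r A : hall_condition r A -> exists f, matching r A f.
Proof.
(* Halmos-Vaughan: split A at a critical subset if there is one; otherwise
   every proper subset has surplus, so any edge at x0 can be fixed first. *)
elim: {A}_.+1 {-2}A (ltnSn #|A|) r => // n IH A leAn r hA.
have [-> | [x0 x0A]] := set_0Vmem A; first by exists (fun=> y0); split=> x; rewrite inE.
have [/existsP[S /and3P[S_ne0 SpA critS]] | /existsPn noncrit] :=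
  boolP [exists S, [&& S != set0, S \proper A & #|neighbours r S| <= #|S|]].
  have SA := proper_sub SpA.
  have [f1 m1] : exists f, matching r S f.
    apply: IH => [|S1 S1S]; first exact: leq_trans (proper_card SpA) leAn.
    exact/hA/(subset_trans S1S SA).
  have [f2 m2] : exists f, matching (avoiding r (neighbours r S)) (A :\: S) f.
    apply: IH (hall_condition_critical hA SA critS).
    have := cardsID S A; rewrite (setIidPr SA).
    by move: leAn (card_gt0 S) S_ne0 => /[swap] <-; lia.
  have f1N : {in S, forall x, f1 x \in neighbours r S}.
    by move=> x xS; rewrite inE; apply/existsP; exists x; rewrite xS m1.2.
  by exists (fun x => if x \in S then f1 x else f2 x); apply: matching_glue m2.
have surplus S : S != set0 -> S \proper A -> #|S| < #|neighbours r S|.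
  by move=> S_ne0 SpA; have := noncrit S; rewrite S_ne0 SpA ltnNge.
have [y1] : exists y, r x0 y.
  have := hA [set x0]; rewrite sub1set x0A cards1 card_gt0 => /(_ isT) /set0Pn[y].
  by rewrite inE => /existsP[x /andP[/set1P-> rx0y]]; exists y.
move=> rx0y1; have [f2 m2] : exists f, matching (avoiding r [set y1]) (A :\ x0) f.
  apply: IH (hall_condition_surplus y1 surplus x0A).
  by have := cardsD1 x0 A; rewrite x0A; move: leAn; lia.
exists (fun x => if x \in [set x0] then y1 else f2 x).
apply: (matching_glue (f1 := fun=> y1)) m2 => [|x _]; last exact: set11.
by split=> [x1 x2 /set1P-> /set1P-> | x /set1P->].
Qed.

End HallMarriage.

Section PairReindex.

Variables (R : Type) (idx : R) (op : SemiGroup.com_law R) (I J : finType).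
Variables (P : pred (I * J)) (F : I * J -> R).

Lemma big_pair_fst i :
  \big[op/idx]_(p | P p && (p.1 == i)) F p = \big[op/idx]_(j | P (i, j)) F (i, j).
Proof.
rewrite (reindex_onto (pair i) snd) => [|[? ?] /andP[_ /eqP /= ->] //].
by apply: eq_bigl => j; rewrite !eqxx !andbT.
Qed.

Lemma big_pair_snd j :
  \big[op/idx]_(p | P p && (p.2 == j)) F p = \big[op/idx]_(i | P (i, j)) F (i, j).
Proof.
rewrite (reindex_onto (pair^~ j) fst) => [|[? ?] /andP[_ /eqP /= ->] //].
by apply: eq_bigl => i; rewrite !eqxx !andbT.
Qed.

End PairReindex.

Section StarCentres.

Variables (T : finType) (e : rel T).

Definition star_centre t (c : T -> T) :=
  [/\ forall x, c (c x) = c x, forall x, c x != x -> e (c x) x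
    & forall x, #|[set y | c y == c x]| = t.+1].

Lemma star_partition_centre t P : star_partition e t P -> exists c, star_centre t c.
Proof.
move=> [/and3P[/eqP coverP trivP _] sizeP starP].
have inP x : pblock P x \in P by rewrite pblock_mem // coverP inE.
have in_pblock x : x \in pblock P x by rewrite mem_pblock coverP inE.
pose is_centre (B : {set T}) y := [forall v in B, (v != y) ==> e y v].
pose c x := odflt x [pick y in pblock P x | is_centre (pblock P x) y].
have pick_c x : [pick y in pblock P x | is_centre (pblock P x) y] = Some (c x).
  rewrite /c; case: pickP => //= no_centre.
  have [y yB cy] := starP _ (inP x); have /negP[] := no_centre y.
  by rewrite yB; apply/forall_inP=> v vB; apply/implyP/cy.
have cP x : c x \in pblock P x /\ {in pblock P x, forall v, v != c x -> e (c x) v}.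
  move: (pick_c x); case: pickP => // y /andP[yB /forall_inP cy] [<-].
  by split=> // v /cy /implyP.
have c_pblock x : pblock P (c x) = pblock P x := same_pblock trivP (cP x).1.
have c_eq x y : (c y == c x) = (y \in pblock P x).
  apply/eqP/idP=> [cyx | /(same_pblock trivP) yx].
    by rewrite -(c_pblock x) -cyx c_pblock in_pblock.
  by have := pick_c y; rewrite yx pick_c => -[->].
exists c; split=> [x | x cx_x | x].
- by apply/eqP; rewrite c_eq (cP x).1.
- by apply: (cP x).2; rewrite // eq_sym.
- by rewrite -(sizeP _ (inP x)); apply: eq_card=> y; rewrite inE c_eq.
Qed.

Lemma centre_star_partition t c :
  star_centre t c -> star_partition e t (preim_partition c [set: T]).
Proof.
move=> [cK c_adj c_fibre]; split=> [|B|B]; first exact: preim_partitionP.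
  by case/imsetP=> x _ ->; rewrite -(c_fibre x); apply: eq_card=> y; rewrite !inE eq_sym.
case/imsetP=> x _ ->; exists (c x); first by rewrite !inE cK eqxx.
move=> v /[!inE] /eqP cxv v_cx; rewrite cxv; apply: c_adj.
by rewrite -cxv eq_sym.
Qed.

Lemma centre_dissolution t Ds c : 0 < t -> star_centre t c ->
  dissolution e (t * Ds) Ds [set x | c x == x]
              (fun p => if c p.2 == p.1 then Ds else 0).
Proof.
move=> t_gt0 [cK c_adj c_fibre]; set D := [set x | _]; split=> [p _ | v | v].
- by case: ifP => // _; apply: leq_pmull.
- rewrite inE => /eqP cv; rewrite big_pair_fst -big_mkcondr /=.
  rewrite (eq_bigl (mem ([set y | c y == c v] :\ v))) => [|y].
    have := cardsD1 v [set y | c y == c v]; rewrite c_fibre inE eqxx.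
    by rewrite sum_nat_const; lia.
  rewrite /= !inE cv eqxx /=; apply/idP/idP=> [/andP[/andP[cy_y _] /eqP cy] | ].
    by rewrite cy eqxx andbT; apply: contraNneq cy_y => ->; rewrite cv.
  case/andP=> y_v /eqP cy; rewrite cy eqxx andbT.
  by rewrite eq_sym y_v -cy c_adj // cy eq_sym.
- rewrite inE => cv; rewrite big_pair_snd -big_mkcondr /=.
  rewrite (eq_bigl (pred1 (c v))) ?big_pred1_eq // => x /=.
  rewrite [c v == x]eq_sym; case: (eqVneq x (c v)) => [-> | _]; rewrite ?andbF // andbT.
  by rewrite !inE cK eqxx cv c_adj.
Qed.

Section MatchingCentre.

Variables (t : nat) (D : {set T}) (f : T * 'I_t -> T).
Let copies := setX D [set: 'I_t].
Hypotheses (f_inj : {in copies &, injective f})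
           (f_adj : {in copies, forall p, e p.1 (f p)})
           (f_onto : f @: copies = ~: D).

Definition matching_centre x :=
  if [pick p in copies | f p == x] is Some p then p.1 else x.

Lemma mem_setXT a i : (a, i) \in copies = (a \in D).
Proof. by rewrite !inE andbT. Qed.

Lemma image_notin p : p \in copies -> f p \notin D.
Proof. by move=> pc; rewrite -in_setC -f_onto imset_f. Qed.

Lemma matching_centre_image p : p \in copies -> matching_centre (f p) = p.1.
Proof.
move=> pc; rewrite /matching_centre; case: pickP => [q /andP[qc /eqP fq] | /(_ p)].
  by rewrite (f_inj qc pc fq).
by rewrite pc eqxx.
Qed.

Lemma matching_centre_id x : x \in D -> matching_centre x = x.
Proof.
move=> xD; rewrite /matching_centre; case: pickP => // p /andP[pc /eqP fpx].
by have := image_notin pc; rewrite fpx xD.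
Qed.

Lemma compl_in_image x : x \notin D -> exists2 p, p \in copies & x = f p.
Proof. by rewrite -in_setC -f_onto => /imsetP. Qed.

Lemma matching_centre_in x : matching_centre x \in D.
Proof.
have [xD | /compl_in_image[p pc ->]] := boolP (x \in D).
  by rewrite matching_centre_id.
by case: p pc => a i pc; rewrite matching_centre_image // -(mem_setXT a i).
Qed.

Lemma matching_centre_fibre a : a \in D ->
  [set y | matching_centre y == a] = a |: [set f (a, i) | i : 'I_t].
Proof.
move=> aD; apply/setP=> y; rewrite !inE.
have [yD | /compl_in_image[[b i] pc ->]] := boolP (y \in D).
  rewrite matching_centre_id // eq_sym; case: eqP => //= _.
  apply/esym/negbTE/imsetP=> -[i _ yE]; move: yD.
  by rewrite yE (negbTE (image_notin _)) ?mem_setXT.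
rewrite matching_centre_image //=; have fD := image_notin pc.
rewrite (_ : (f (b, i) == a) = false) /=; last by apply: contraNF fD => /eqP->.
apply/eqP/imsetP=> [-> | [j _ /(f_inj pc)]]; first by exists i.
by rewrite mem_setXT => /(_ aD) [].
Qed.

Lemma matching_centre_star : star_centre t matching_centre.
Proof.
split=> [x | x | x].
- exact/matching_centre_id/matching_centre_in.
- have [xD | /compl_in_image[p pc ->] _] := boolP (x \in D).
    by rewrite matching_centre_id ?eqxx.
  by rewrite matching_centre_image //; apply: f_adj.
have aD := matching_centre_in x; rewrite matching_centre_fibre // cardsU1 card_in_imset.
  rewrite card_ord; case: imsetP => // -[i _ cE].
  by have := @image_notin (matching_centre x, i); rewrite mem_setXT -cE aD => /(_ isT).
by move=> i j _ _ /f_inj; rewrite !mem_setXT => /(_ aD aD) [].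
Qed.

End MatchingCentre.

Section DissolutionMatching.

Variables (t Ds : nat) (D : {set T}) (z : T * T -> nat).
Hypotheses (Ds_gt0 : 0 < Ds) (dissolutionDz : dissolution e (t * Ds) Ds D z).
Let copies := setX D [set: 'I_t].

Definition dissolution_rel (p : T * 'I_t) y := [&& e p.1 y, y \notin D & 0 < z (p.1, y)].

Lemma sum_dissolution_fst (S : {set T}) : S \subset D ->
  \sum_(p in Zset e D | p.1 \in S) z p = #|S| * (t * Ds).
Proof.
have [_ sumD _] := dissolutionDz; move=> SD.
rewrite (partition_big fst (mem S)) => [|p /andP[]//]; rewrite -sum_nat_const.
apply: eq_bigr => a /[!inE] aS; rewrite -(sumD a (subsetP SD a aS)).
by apply: eq_bigl => p; case: eqP => [->|]; rewrite ?aS ?andbT ?andbF.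
Qed.

Lemma sum_dissolution_snd (N : {set T}) : N \subset ~: D ->
  \sum_(p in Zset e D | p.2 \in N) z p = #|N| * Ds.
Proof.
have [_ _ sumC] := dissolutionDz; move=> NC.
rewrite (partition_big snd (mem N)) => [|p /andP[]//]; rewrite -sum_nat_const.
apply: eq_bigr => y /[!inE] yN; have := subsetP NC y yN; rewrite inE => /sumC <-.
by apply: eq_bigl => p; case: eqP => [->|]; rewrite ?yN ?andbT ?andbF.
Qed.

Lemma card_dissolution_compl : #|~: D| = #|D| * t.
Proof.
have Z1 p : p \in Zset e D -> p.1 \in D by rewrite inE => /and3P[].
have Z2 p : p \in Zset e D -> p.2 \in ~: D by rewrite !inE => /and3P[].
have := sum_dissolution_fst (subxx D); have := sum_dissolution_snd (subxx (~: D)).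
rewrite (eq_bigl _ _ (fun p => andb_idr (@Z1 p))) (eq_bigl _ _ (fun p => andb_idr (@Z2 p))).
by move=> -> /eqP; rewrite mulnA eqn_pmul2r // => /eqP.
Qed.

Lemma hall_condition_dissolution : hall_condition dissolution_rel copies.
Proof.
move=> S Sc; set S1 := [set p.1 | p in S].
have S1D : S1 \subset D.
  by apply/subsetP=> _ /imsetP[[a i] /(subsetP Sc) /setXP[aD _] ->].
have leS : #|S| <= #|S1| * t.
  have -> : #|S1| * t = #|setX S1 [set: 'I_t]| by rewrite cardsX cardsT card_ord.
  by apply/subset_leq_card/subsetP=> p pS; rewrite inE in_setT imset_f.
have NC : neighbours dissolution_rel S \subset ~: D.
  by apply/subsetP=> y; rewrite !inE => /existsP[p /and4P[]].
(* S1 sends t * Ds per vertex along positive edges, all of which end in the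
   neighbourhood of S, whose vertices receive only Ds each. *)
have : \sum_(p in Zset e D | p.1 \in S1) z p <=
       \sum_(p in Zset e D | p.2 \in neighbours dissolution_rel S) z p.
  rewrite big_mkcond [leqRHS]big_mkcond; apply: leq_sum => -[a y] _ /=.
  case: ifP => [/andP[pZ /imsetP[q qS qa]] | _] //.
  case: (posnP (z (a, y))) => [-> // | zpos]; rewrite pZ /= ifT //.
  move: pZ; rewrite inE => /and3P[_ /= yD ay]; rewrite inE.
  by apply/existsP; exists q; rewrite qS /dissolution_rel -qa ay yD zpos.
rewrite sum_dissolution_fst // sum_dissolution_snd // mulnA leq_pmul2r //.
exact: leq_trans leS.
Qed.

Lemma dissolution_centre : exists c, star_centre t c.
Proof.
have [y0 _ | T0] := pickP (@predT T); last by exists id; split=> x; have := T0 x.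
have [f [f_inj f_rel]] := hall_marriage y0 hall_condition_dissolution.
have f_adj : {in copies, forall p, e p.1 (f p)} by move=> p /f_rel /and3P[].
have f_sub : f @: copies \subset ~: D.
  by apply/subsetP=> _ /imsetP[p /f_rel /and3P[_ fD _] ->]; rewrite inE.
have f_onto : f @: copies = ~: D.
  apply/eqP; rewrite eqEcard f_sub card_in_imset // card_dissolution_compl.
  by rewrite cardsX cardsT card_ord leqnn.
by exists (matching_centre D f); apply: matching_centre_star.
Qed.

End DissolutionMatching.

End StarCentres.

Theorem proposition1 (T : finType) (e : rel T) (t Ds : nat) :
  simple_graph e -> 0 < t -> 0 < Ds ->
  (exists (D : {set T}) (z : T * T -> nat), dissolution e (t * Ds) Ds D z) <->
  (exists P : {set {set T}}, star_partition e t P).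
Proof.
move=> _ t_gt0 Ds_gt0; split=> [[D [z dissolutionDz]] | [P starP]].
  have [c c_star] := dissolution_centre Ds_gt0 dissolutionDz.
  by exists (preim_partition c [set: T]); apply: centre_star_partition.
have [c c_star] := star_partition_centre starP.
by exists [set x | c x == x], (fun p => if c p.2 == p.1 then Ds else 0);
   apply: centre_dissolution.
Qed.
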